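(* Suppose there is a finite set $C$ and a function $c:\mathcal Y\to C$ such that, for every $(a,b)\in\mathbf K$ and $y\in\mathcal Y_b$, $g(a,b,y)=h(a,b,c(y))$ for some function $h:\mathbf K\times C\to\{0,\dots,N-1\}$. For $b\in S^B$ and $\kappa\in C$, let $F_{b,\kappa}=\sum_{y\in\mathcal Y_b,\,c(y)=\kappa}P^B_y$ be the coarse-grained POVM elements. Let $\hat B$ be a register with orthonormal basis $\{|\kappa\rangle\}_{\kappa\in C}$. Define $$\hat K^B_b=\sum_{\kappa\in C}\sqrt{F_{b,\kappa}}\otimes|b\rangle_{\tilde B}\otimes|\kappa\rangle_{\hat B},\qquad \hat V=\sum_{(a,b)\in\mathbf K,\ \kappa\in C}|h(a,b,\kappa)\rangle_R\otimes|a\rangle\langle a|_{\tilde A}\otimes|b\rangle\langle b|_{\tilde B}\otimes|\kappa\rangle\langle\kappa|_{\hat B},$$ and $$\hat{\mathcal G}(\sigma)=\hat V\Pi\Big(\sum_{a,b}(K^A_a\otimes\hat K^B_b)\sigma(K^A_a\otimes\hat K^B_b)^\dagger\Big)\Pi\hat V^\dagger.$$ Then for every density operator $\rho_{AB}$ on $H_A\otimes H_B$, $$D\big(\mathcal G(\rho_{AB})\,\|\,\mathcal Z[\mathcal G(\rho_{AB})]\big)=D\big(\hat{\mathcal G}(\rho_{AB})\,\|\,\mathcal Z[\hat{\mathcal G}(\rho_{AB})]\big).$$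
   Context: Setting (reverse-reconciliation postprocessing). Registers and measurements. $H_A,H_B$ are finite-dimensional Hilbert spaces. Alice has a POVM $\{P^A_x\}_{x\in\mathcal X}$ on $H_A$, and Bob has a POVM $\{P^B_y\}_{y\in\mathcal Y}$ on $H_B$. Alice's announcement set $S^A$ gives a partition $\mathcal X=\bigcup_{a\in S^A}\mathcal X_a$ with $|\mathcal X_a|=\omega_A$ for all $a$. Bob's announcement set $S^B$ gives a partition $\mathcal Y=\bigcup_{b\in S^B}\mathcal Y_b$ with $|\mathcal Y_b|=\omega_B$ for all $b$. Fix bijections $f_a:\Omega^A=\{1,\dots,\omega_A\}\to\mathcal X_a$ and $f_b:\Omega^B=\{1,\dots,\omega_B\}\to\mathcal Y_b$. The registers $\tilde A,\tilde B,\bar A,\bar B$ have orthonormal bases $\{|a\rangle\}_{a\in S^A}$, $\{|b\rangle\}_{b\in S^B}$, $\{|\alpha\rangle\}_{\alpha\in\Omega^A}$ and $\{|\beta\rangle\}_{\beta\in\Omega^B}$ respectively. Announcement map. Define $$K^A_a=\sum_{\alpha\in\Omega^A}\sqrt{P^A_{f_a(\alpha)}}\otimes|a\rangle_{\tilde A}\otimes|\alpha\rangle_{\bar A},\qquad K^B_b=\sum_{\beta\in\Omega^B}\sqrt{P^B_{f_b(\beta)}}\otimes|b\rangle_{\tilde B}\otimes|\beta\rangle_{\bar B},$$ and $\mathcal A(\sigma)=\sum_{a\in S^A,b\in S^B}(K^A_a\otimes K^B_b)\sigma(K^A_a\otimes K^B_b)^\dagger$. Sifting. Fix a subset $\mathbf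 K\subseteq S^A\times S^B$ of kept announcements and let $\Pi=\sum_{(a,b)\in\mathbf K}|a\rangle\langle a|_{\tilde A}\otimes|b\rangle\langle b|_{\tilde B}$. Key map. Fix a key map $g:\mathbf K\times\mathcal Y\to\{0,\dots,N-1\}$. The register $R$ has orthonormal basis $\{|j\rangle\}_{j=0}^{N-1}$. Define $$V=\sum_{(a,b)\in\mathbf K,\ \beta\in\Omega^B}|g(a,b,f_b(\beta))\rangle_R\otimes|a\rangle\langle a|_{\tilde A}\otimes|b\rangle\langle b|_{\tilde B}\otimes|\beta\rangle\langle\beta|_{\bar B}.$$ Maps. $\mathcal G(\sigma)=V\Pi\mathcal A(\sigma)\Pi V^\dagger$, and $\mathcal Z(\sigma)=\sum_{j=0}^{N-1}(|j\rangle\langle j|_R\otimes\mathbb 1)\sigma(|j\rangle\langle j|_R\otimes\mathbb 1)$. Relative entropy. $D(\rho\|\sigma)=\operatorname{Tr}(\rho\log_2\rho)-\operatorname{Tr}(\rho\log_2\sigma)$, used also for subnormalized positive operators. *)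

From Stdlib Require Import Reals ClassicalEpsilon.
From mathcomp Require Import all_boot.

Set Implicit Arguments.
Unset Strict Implicit.
Unset Printing Implicit Defensive.

Record C := mkC { Cre : R ; Cim : R }.

Definition C0 : C := mkC R0 R0.
Definition C1 : C := mkC R1 R0.
Definition RtoC (r : R) : C := mkC r R0.
Definition Cadd (x y : C) : C := mkC (Rplus (Cre x) (Cre y)) (Rplus (Cim x) (Cim y)).
Definition Cmul (x y : C) : C :=
  mkC (Rminus (Rmult (Cre x) (Cre y)) (Rmult (Cim x) (Cim y)))
      (Rplus (Rmult (Cre x) (Cim y)) (Rmult (Cim x) (Cre y))).
Definition Cconj (x : C) : C := mkC (Cre x) (Ropp (Cim x)).
Definition Cb (b : bool) : C := if b then C1 else C0.

(* Operators: a linear map from C^J to C^I is a matrix I -> J -> C.    *)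
Definition op (I J : finType) := I -> J -> C.

Definition opmul (I J K : finType) (A : op I J) (B : op J K) : op I K :=
  fun i k => \big[Cadd/C0]_(j : J) Cmul (A i j) (B j k).
Definition adj (I J : finType) (A : op I J) : op J I := fun j i => Cconj (A i j).
Definition idop (I : finType) : op I I := fun i j => Cb (i == j).
Definition zeroop (I J : finType) : op I J := fun _ _ => C0.
Definition opsum (T I J : finType) (F : T -> op I J) : op I J :=
  fun i j => \big[Cadd/C0]_(t : T) F t i j.
Definition tr (I : finType) (A : op I I) : C := \big[Cadd/C0]_(i : I) A i i.
Definition tensor (I1 J1 I2 J2 : finType) (A : op I1 J1) (B : op I2 J2)
  : op (I1 * I2)%type (J1 * J2)%type := fun i j => Cmul (A i.1 j.1) (B i.2 j.2).
Definition conjop (I J : finType) (A : op I J) (s : op J J) : op I I :=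
  opmul (opmul A s) (adj A).

Definition psd (I : finType) (A : op I I) : Prop :=
  forall v : I -> C,
    let q := \big[Cadd/C0]_(i : I) \big[Cadd/C0]_(j : I)
               Cmul (Cconj (v i)) (Cmul (A i j) (v j)) in
    Cim q = R0 /\ Rle R0 (Cre q).
Definition density (I : finType) (rho : op I I) : Prop := psd rho /\ tr rho = C1.
Definition povm (X I : finType) (P : X -> op I I) : Prop :=
  (forall x, psd (P x)) /\ opsum P = @idop I.

Definition unitary (I : finType) (U : op I I) : Prop := opmul (adj U) U = @idop I.
Definition diagop (I : finType) (d : I -> R) : op I I :=
  fun i j => if i == j then RtoC (d i) else C0.
Definition fcalc_rel (I : finType) (f : R -> R) (A B : op I I) : Prop :=
  exists (U : op I I) (d : I -> R), unitary U /\
    A = conjop U (diagop d) /\ B = conjop U (diagop (fun i => f (d i))).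
Definition fcalc (I : finType) (f : R -> R) (A : op I I) : op I I :=
  epsilon (inhabits (@zeroop I I)) (fcalc_rel f A).

Definition msqrt (I : finType) (A : op I I) : op I I := fcalc sqrt A.
(* log base 2, taken on the support (log2 0 := 0) *)
Definition Rlog2 (x : R) : R :=
  if Rlt_dec R0 x then Rdiv (ln x) (ln (IZR 2%Z)) else R0.
Definition mlog2 (I : finType) (A : op I I) : op I I := fcalc Rlog2 A.

Definition relent (I : finType) (rho sigma : op I I) : R :=
  Rminus (Cre (tr (opmul rho (mlog2 rho)))) (Cre (tr (opmul rho (mlog2 sigma)))).

(* Kraus operator  sum_w sqrt(Q s w) (x) |s> (x) |w>  : H -> H (x) S (x) W *)
Definition kraus (H S W : finType) (Q : S -> W -> op H H) (s : S)
  : op (H * S * W)%type H :=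
  fun o j => if o.1.2 == s then msqrt (Q s o.2) o.1.1 j else C0.

Definition annMap (HA SA WA HB SB WB : finType)
  (QA : SA -> WA -> op HA HA) (QB : SB -> WB -> op HB HB)
  (sigma : op (HA * HB)%type (HA * HB)%type)
  : op ((HA * SA * WA) * (HB * SB * WB))%type ((HA * SA * WA) * (HB * SB * WB))%type :=
  opsum (fun ab : (SA * SB)%type =>
           conjop (tensor (kraus QA ab.1) (kraus QB ab.2)) sigma).

Definition siftProj (HA SA WA HB SB WB : finType) (Kp : pred (SA * SB)%type)
  : op ((HA * SA * WA) * (HB * SB * WB))%type ((HA * SA * WA) * (HB * SB * WB))%type :=
  fun o o' => Cb ((o == o') && Kp (o.1.1.2, o.2.1.2)).

(* key map  V = sum_{(a,b) in K, w} |key a b w>_R (x) |a><a| (x) |b><b| (x) |w><w| *)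
Definition keyIso (HA SA WA HB SB WB : finType) (N : nat) (Kp : pred (SA * SB)%type)
  (key : SA -> SB -> WB -> 'I_N)
  : op ('I_N * ((HA * SA * WA) * (HB * SB * WB)))%type ((HA * SA * WA) * (HB * SB * WB))%type :=
  fun ro o' =>
    let a := o'.1.1.2 in let b := o'.2.1.2 in let w := o'.2.2 in
    Cb [&& ro.2 == o', Kp (a, b) & ro.1 == key a b w].

Definition Gmap (HA SA WA HB SB WB : finType) (N : nat)
  (QA : SA -> WA -> op HA HA) (QB : SB -> WB -> op HB HB)
  (Kp : pred (SA * SB)%type) (key : SA -> SB -> WB -> 'I_N)
  (sigma : op (HA * HB)%type (HA * HB)%type) :=
  conjop (@keyIso HA SA WA HB SB WB N Kp key)
         (conjop (@siftProj HA SA WA HB SB WB Kp) (annMap QA QB sigma)).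

Definition Zmap (N : nat) (O : finType) (sigma : op ('I_N * O)%type ('I_N * O)%type)
  : op ('I_N * O)%type ('I_N * O)%type :=
  fun r r' => if r.1 == r'.1 then sigma r r' else C0.

Definition block (S W Y : finType) (f : S -> W -> Y) (s : S) : {set Y} :=
  [set f s w | w : W].

Definition coarse (Y SB Cs HB : finType) (nB : nat)
  (fB : SB -> 'I_nB -> Y) (PB : Y -> op HB HB) (c : Y -> Cs) (b : SB) (k : Cs)
  : op HB HB :=
  fun i j => \big[Cadd/C0]_(y | (y \in block fB b) && (c y == k)) PB y i j.

(* Both terms of D are traces of the form Tr(X f(Y)) with f = log2.  The proof
   rests on three observations.
   1. Moments determine Tr(X f(X)): for Hermitian X, f(X) = p(X) for any real
      polynomial p interpolating f on the spectrum of X, hence Tr(X f(X)) is a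
      fixed linear combination of the moments Tr(X^(n+1)); two Hermitian
      operators with equal moments give equal values (one p serves both).
   2. Pinching: Z(G) is block diagonal in the key register, so is log Z(G), and
      Tr(G log Z(G)) = Tr(Z(G) log Z(G)).  Thus D is a difference of two
      quantities of the form in 1, for G and for Z(G).
   3. G(rho) = sum_t A_t rho A_t^+ and Z(G(rho)) = sum_(j,t) A_(j,t) rho A_(j,t)^+
      with mutually orthogonal Kraus operators (A_t^+ A_u = 0 for t <> u), so
      their moments are sum_t Tr((rho A_t^+ A_t)^(n+1)).  The Gram operators
      A_t^+ A_t factor as (Alice's effect) x (sum of Bob's effects selected by
      the key), and the hypothesis g = h o c says that grouping Bob's effects
      by the coarse label c leaves these sums unchanged. *)
From Pilot Require Import Defs.
From Stdlib Require Import Reals FunctionalExtensionality ClassicalEpsilon.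
From mathcomp Require Import all_boot all_algebra.
From mathcomp Require Import Rstruct complex spectral sesquilinear ring lra.

Import GRing.Theory Num.Theory Num.Def.
Local Open Scope ring_scope.
Local Open Scope sesquilinear_scope.
Set Implicit Arguments.
Unset Strict Implicit.
Unset Printing Implicit Defensive.

Notation CC := (R[i]).

Definition toC (x : Defs.C) : CC := Complex (Cre x) (Cim x).
Definition ofC (z : CC) : Defs.C := mkC (complex.Re z) (complex.Im z).

Lemma toC_add x y : toC (Cadd x y) = toC x + toC y. Proof. by case: x; case: y. Qed.
Lemma toC_mul x y : toC (Cmul x y) = toC x * toC y. Proof. by case: x; case: y. Qed.
Lemma toC_conj x : toC (Cconj x) = (toC x)^*. Proof. by case: x. Qed.
Lemma toC0 : toC Defs.C0 = 0. Proof. by []. Qed.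
Lemma toC_bool b : toC (Cb b) = b%:R. Proof. by case: b. Qed.
Lemma ofCK z : toC (ofC z) = z. Proof. by case: z. Qed.
Lemma toC_inj : injective toC. Proof. by move=> [a b] [c d] [-> ->]. Qed.

Lemma toC_big (T : Type) (r : seq T) (P : pred T) (F : T -> Defs.C) :
  toC (\big[Cadd/Defs.C0]_(i <- r | P i) F i) = \sum_(i <- r | P i) toC (F i).
Proof. exact: (big_morph toC toC_add toC0). Qed.

Definition cop (I J : finType) := I -> J -> CC.
Definition cmul (I J L : finType) (A : cop I J) (B : cop J L) : cop I L :=
  fun i k => \sum_j A i j * B j k.
Definition cadj (I J : finType) (A : cop I J) : cop J I := fun j i => (A i j)^*.
Definition cid (I : finType) : cop I I := fun i j => (i == j)%:R.
Definition czero (I J : finType) : cop I J := fun _ _ => 0.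
Definition ctr (I : finType) (A : cop I I) : CC := \sum_i A i i.
Definition cdiag (I : finType) (d : I -> R) : cop I I :=
  fun i j => if i == j then (d i)%:C%C else 0.
Definition cscale (I J : finType) (c : CC) (A : cop I J) : cop I J :=
  fun i j => c * A i j.
Definition csum (T I J : finType) (F : T -> cop I J) : cop I J :=
  fun i j => \sum_t F t i j.
Definition sandwich (I J : finType) (A : cop I J) (X : cop J J) : cop I I :=
  cmul (cmul A X) (cadj A).
Definition herm (I : finType) (A : cop I I) := cadj A = A.
Definition unitary (I : finType) (U : cop I I) := cmul (cadj U) U = @cid I.

Lemma copP (I J : finType) (A B : cop I J) : (forall i j, A i j = B i j) -> A = B.
Proof.
by move=> H; do 2![apply: functional_extensionality => ?]; exact: H.
Qed.

Lemma eq_csum (T I J : finType) (F G : T -> cop I J) :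
  (forall t, F t = G t) -> csum F = csum G.
Proof. by move=> H; apply: copP => i j; apply: eq_bigr => t _; rewrite H. Qed.

Section CopAlgebra.
Variables I J L M : finType.

Lemma cmulA (A : cop I J) (B : cop J L) (D : cop L M) :
  cmul (cmul A B) D = cmul A (cmul B D).
Proof.
apply: copP => i l; rewrite /cmul.
under eq_bigr do rewrite mulr_suml.
rewrite exchange_big /=; apply: eq_bigr => j _; rewrite mulr_sumr.
by apply: eq_bigr => k _; rewrite mulrA.
Qed.

Lemma cmulc1 (A : cop I J) : cmul A (@cid J) = A.
Proof.
apply: copP => i j; rewrite /cmul /cid (bigD1 j) //= eqxx mulr1 big1 ?addr0 //.
by move=> k /negbTE ->; rewrite mulr0.
Qed.

Lemma cmul1c (A : cop I J) : cmul (@cid I) A = A.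
Proof.
apply: copP => i j; rewrite /cmul /cid (bigD1 i) //= eqxx mul1r big1 ?addr0 //.
by move=> k; rewrite eq_sym => /negbTE ->; rewrite mul0r.
Qed.

Lemma cmulc0 (A : cop I J) : cmul A (@czero J L) = @czero I L.
Proof. by apply: copP => i k; rewrite /cmul big1 // => j _; rewrite mulr0. Qed.

Lemma cmul0c (A : cop J L) : cmul (@czero I J) A = @czero I L.
Proof. by apply: copP => i k; rewrite /cmul big1 // => j _; rewrite mul0r. Qed.

Lemma cadjK (A : cop I J) : cadj (cadj A) = A.
Proof. by apply: copP => i j; rewrite /cadj conjCK. Qed.

Lemma cadj_mul (A : cop I J) (B : cop J L) : cadj (cmul A B) = cmul (cadj B) (cadj A).
Proof.
apply: copP => l i; rewrite /cadj /cmul rmorph_sum; apply: eq_bigr => j _.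
by rewrite rmorphM mulrC.
Qed.

Lemma ctrC (A : cop I J) (B : cop J I) : ctr (cmul A B) = ctr (cmul B A).
Proof.
rewrite /ctr /cmul exchange_big; apply: eq_bigr => j _; apply: eq_bigr => i _.
by rewrite mulrC.
Qed.

Lemma cmul_suml (T : finType) (F : T -> cop I J) (B : cop J L) :
  cmul (csum F) B = csum (fun t => cmul (F t) B).
Proof.
apply: copP => i k; rewrite /cmul /csum.
by under eq_bigr do rewrite mulr_suml; rewrite exchange_big.
Qed.

Lemma cmul_sumr (T : finType) (A : cop I J) (F : T -> cop J L) :
  cmul A (csum F) = csum (fun t => cmul A (F t)).
Proof.
apply: copP => i k; rewrite /cmul /csum.
by under eq_bigr do rewrite mulr_sumr; rewrite exchange_big.
Qed.

Lemma cadj_sum (T : finType) (F : T -> cop I J) :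
  cadj (csum F) = csum (fun t => cadj (F t)).
Proof. by apply: copP => j i; rewrite /cadj /csum rmorph_sum. Qed.

Lemma ctr_sum (T : finType) (F : T -> cop I I) : ctr (csum F) = \sum_t ctr (F t).
Proof. by rewrite /ctr /csum exchange_big. Qed.

End CopAlgebra.

Section Sandwich.
Variables I J L : finType.

Lemma sandwich_sum (T : finType) (A : cop I J) (F : T -> cop J J) :
  sandwich A (csum F) = csum (fun t => sandwich A (F t)).
Proof. by rewrite /sandwich cmul_sumr cmul_suml. Qed.

Lemma sandwichA (A : cop I J) (B : cop J L) (X : cop L L) :
  sandwich A (sandwich B X) = sandwich (cmul A B) X.
Proof. by rewrite /sandwich cadj_mul !cmulA. Qed.

Lemma cadj_sandwich (A : cop I J) (X : cop J J) :
  cadj (sandwich A X) = sandwich A (cadj X).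
Proof. by rewrite /sandwich !cadj_mul cadjK cmulA. Qed.

End Sandwich.

Definition toCop (I J : finType) (A : op I J) : cop I J := fun i j => toC (A i j).

Section Transfer.
Variables I J L : finType.

Lemma toCop_mul (A : op I J) (B : op J L) : toCop (opmul A B) = cmul (toCop A) (toCop B).
Proof.
apply: copP => i k; rewrite /toCop /opmul toC_big.
by apply: eq_bigr => j _; exact: toC_mul.
Qed.

Lemma toCop_adj (A : op I J) : toCop (adj A) = cadj (toCop A).
Proof. by apply: copP => i j; rewrite /toCop /adj toC_conj. Qed.

Lemma toCop_id : toCop (@idop I) = @cid I.
Proof. by apply: copP => i j; rewrite /toCop /idop toC_bool. Qed.

Lemma toCop_sum (T : finType) (F : T -> op I J) :
  toCop (opsum F) = csum (fun t => toCop (F t)).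
Proof. by apply: copP => i j; rewrite /toCop /opsum toC_big. Qed.

Lemma toC_tr (A : op I I) : toC (tr A) = ctr (toCop A).
Proof. by rewrite /tr toC_big. Qed.

Lemma toCop_diag (d : I -> R) : toCop (diagop d) = cdiag d.
Proof. by apply: copP => i j; rewrite /toCop /diagop /cdiag; case: eqP. Qed.

Lemma toCop_inj (A B : op I J) : toCop A = toCop B -> A = B.
Proof.
move=> H; do 2![apply: functional_extensionality => ?]; apply: toC_inj.
exact: (congr1 (fun F => F _ _) H).
Qed.

End Transfer.

Lemma toCop_sandwich (I J : finType) (A : op I J) (X : op J J) :
  toCop (conjop A X) = sandwich (toCop A) (toCop X).
Proof. by rewrite /conjop /sandwich !toCop_mul toCop_adj. Qed.


Definition toM (I J : finType) (A : cop I J) : 'M[CC]_(#|I|, #|J|) :=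
  \matrix_(i, j) A (enum_val i) (enum_val j).
Definition fromM (I J : finType) (M : 'M[CC]_(#|I|, #|J|)) : cop I J :=
  fun i j => M (enum_rank i) (enum_rank j).

Section Matrices.
Variables I J L : finType.

Lemma fromMK (M : 'M[CC]_(#|I|, #|J|)) : toM (fromM M) = M.
Proof. by apply/matrixP => i j; rewrite /fromM /toM mxE !enum_valK. Qed.

Lemma toM_inj : injective (@toM I J).
Proof.
move=> A B /matrixP H; apply: copP => i j.
by have := H (enum_rank i) (enum_rank j); rewrite !mxE !enum_rankK.
Qed.

Lemma toM_mul (A : cop I J) (B : cop J L) : toM (cmul A B) = toM A *m toM B.
Proof.
apply/matrixP => i k; rewrite /toM !mxE /cmul.
have -> : forall F : J -> CC, \sum_j F j = \sum_(j < #|J|) F (enum_val j).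
  by move=> F; rewrite -big_enum_val.
by apply: eq_bigr => j _; rewrite !mxE.
Qed.

Lemma toM_id : toM (@cid I) = 1%:M.
Proof. by apply/matrixP => i j; rewrite /toM !mxE /cid (inj_eq enum_val_inj). Qed.

Lemma toM_adj (A : cop I J) : toM (cadj A) = (toM A)^t conjC.
Proof. by apply/matrixP => i j; rewrite /toM !mxE. Qed.

End Matrices.

Lemma unitary_sym (I : finType) (U : cop I I) :
  unitary U -> cmul U (cadj U) = @cid I.
Proof.
move=> HU; apply: toM_inj; move: (congr1 (@toM I I) HU).
by rewrite !toM_mul toM_id; exact: mulmx1C.
Qed.

Lemma real_Re (z : CC) : z \is Num.real -> ((complex.Re z)%:C)%C = z.
Proof.
rewrite CrealE; case: z => a b /eqP [] /= Hb.
suff -> : b = 0 by [].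
by apply/eqP; rewrite -eqNr Hb.
Qed.

Lemma herm_spectral (I : finType) (X : cop I I) : herm X ->
  exists (U : cop I I) (d : I -> R), unitary U /\ X = sandwich U (cdiag d).
Proof.
move=> HX; set M := toM X.
have Mh : M \is hermsymmx.
  by rewrite is_hermitianmxE expr0 scale1r /M -toM_adj HX.
have /orthomx_spectralP := hermitian_normalmx Mh.
have Mreal := hermitian_spectral_diag_real Mh.
set P := spectralmx M; set sp := spectral_diag M => HM.
have Pu : P \is unitarymx by exact: spectral_unitarymx.
rewrite invmx_unitary // in HM.
exists (fromM (P ^t*)), (fun i => complex.Re (sp 0 (enum_rank i))); split.
  apply: toM_inj; rewrite toM_mul toM_adj fromMK trmxCK toM_id.
  by apply/unitarymxP.
apply: toM_inj; rewrite /sandwich !toM_mul toM_adj fromMK trmxCK -/M HM.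
congr (_ *m _ *m _); apply/matrixP => i j; rewrite /toM !mxE /cdiag.
rewrite (inj_eq enum_val_inj) enum_valK.
case: eqP => [->|]; last by rewrite mulr0n.
by rewrite mulr1n real_Re //; move/mxOverP: Mreal; apply.
Qed.

Fixpoint cpow (I : finType) (X : cop I I) (n : nat) : cop I I :=
  if n is n'.+1 then cmul (cpow X n') X else @cid I.
Definition cpoly (I : finType) (p : {poly R}) (X : cop I I) : cop I I :=
  csum (fun k : 'I_(size p) => cscale ((p`_k)%:C)%C (cpow X k)).

Lemma cpowSl (I : finType) (X : cop I I) n : cmul X (cpow X n) = cpow X n.+1.
Proof.
elim: n => [|n IH] /=; first by rewrite cmulc1 cmul1c.
by rewrite -cmulA IH.
Qed.

Lemma cdiag_mul (I : finType) (a b : I -> R) :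
  cmul (cdiag a) (cdiag b) = cdiag (fun i => a i * b i).
Proof.
apply: copP => i j; rewrite /cmul /cdiag (bigD1 i) //= eqxx big1 ?addr0.
  by case: eqP => [->|]; rewrite ?mulr0 // rmorphM.
by move=> k /negbTE; rewrite eq_sym => ->; rewrite mul0r.
Qed.

Section DiagonalCalculus.
Variables (I : finType) (U : cop I I).
Hypothesis HU : unitary U.

Lemma sandwich_diag_mul (a b : I -> R) :
  cmul (sandwich U (cdiag a)) (sandwich U (cdiag b)) =
  sandwich U (cdiag (fun i => a i * b i)).
Proof.
rewrite /sandwich !cmulA -[cmul (cadj U) (cmul U _)]cmulA HU cmul1c.
by rewrite -[cmul (cdiag a) (cmul _ _)]cmulA cdiag_mul.
Qed.

Lemma cpow_sandwich_diag (d : I -> R) n :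
  cpow (sandwich U (cdiag d)) n = sandwich U (cdiag (fun i => d i ^+ n)).
Proof.
elim: n => [|n IH] /=.
  rewrite (_ : cdiag _ = @cid I); last first.
    by apply: copP => i j; rewrite /cdiag /cid; case: eqP.
  by rewrite /sandwich cmulc1 (unitary_sym HU).
rewrite IH sandwich_diag_mul; congr (sandwich U (cdiag _)).
by apply: functional_extensionality => i; rewrite exprS mulrC.
Qed.

Lemma cscale_sandwich_diag (c : R) (a : I -> R) :
  cscale (c%:C)%C (sandwich U (cdiag a)) = sandwich U (cdiag (fun i => c * a i)).
Proof.
apply: copP => i j; rewrite /cscale /sandwich /cmul mulr_sumr; apply: eq_bigr => k _.
rewrite mulrA; congr (_ * _); rewrite mulr_sumr; apply: eq_bigr => l _.
rewrite /cdiag; case: eqP => _; last by rewrite !mulr0.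
by rewrite rmorphM mulrCA.
Qed.

Lemma csum_sandwich_diag (T : finType) (a : T -> I -> R) :
  csum (fun t => sandwich U (cdiag (a t))) = sandwich U (cdiag (fun i => \sum_t a t i)).
Proof.
rewrite -sandwich_sum; congr (sandwich U _); apply: copP => i j.
rewrite /csum /cdiag; case: eqP => _; last by rewrite big1.
by rewrite rmorph_sum.
Qed.

(* A polynomial of U diag(d) U^+ is U diag(p o d) U^+; hence any function of
   the eigenvalues is a polynomial of the matrix. *)
Lemma cpoly_sandwich_diag (d : I -> R) (f : R -> R) (p : {poly R}) :
  (forall i, p.[d i] = f (d i)) ->
  sandwich U (cdiag (fun i => f (d i))) = cpoly p (sandwich U (cdiag d)).
Proof.
move=> Hp; rewrite /cpoly.
under [RHS]eq_csum => k do rewrite cpow_sandwich_diag cscale_sandwich_diag.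
rewrite csum_sandwich_diag; congr (sandwich U (cdiag _)).
by apply: functional_extensionality => i; rewrite -Hp horner_coef.
Qed.

End DiagonalCalculus.

Lemma interpolation (s : seq R) (f : R -> R) :
  exists p : {poly R}, {in s, forall x, p.[x] = f x}.
Proof.
elim: s => [|y s [p Hp]]; first by exists 0.
have [ys|yns] := boolP (y \in s).
  by exists p => x; rewrite inE => /orP [/eqP ->|]; exact: Hp.
set q := \prod_(z <- s) ('X - z%:P).
have qy : q.[y] != 0 by rewrite -/(root q y) /q root_prod_XsubC.
exists (p + ((f y - p.[y]) / q.[y]) *: q) => x; rewrite inE => /orP [/eqP ->|xs].
  by rewrite hornerD hornerZ divfK // addrC subrK.
have qx : q.[x] = 0 by apply/eqP; rewrite -/(root q x) /q root_prod_XsubC.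
by rewrite hornerD hornerZ qx mulr0 addr0 Hp.
Qed.

Lemma fcalc_spec (I : finType) (f : R -> R) (X : op I I) : herm (toCop X) ->
  exists (U : cop I I) (d : I -> R), unitary U /\
    toCop X = sandwich U (cdiag d) /\
    toCop (fcalc f X) = sandwich U (cdiag (fun i => f (d i))).
Proof.
move=> HX; have [V [d [HV HXd]]] := herm_spectral HX.
pose W : op I I := fun i j => ofC (V i j).
have WV : toCop W = V by apply: copP => i j; rewrite /toCop /W ofCK.
have rel_ex : exists B, fcalc_rel f X B.
  exists (conjop W (diagop (fun i => f (d i)))), W, d; split; [|split] => //.
  - by apply: toCop_inj; rewrite toCop_mul toCop_adj toCop_id WV.
  - by apply: toCop_inj; rewrite toCop_sandwich toCop_diag WV.
have [U' [d' [HU' [HX' HB']]]] :=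
  epsilon_spec (inhabits (@zeroop I I)) (fcalc_rel f X) rel_ex.
exists (toCop U'), d'; split; [|split].
- by rewrite /unitary -toCop_adj -toCop_mul HU' toCop_id.
- by rewrite HX' toCop_sandwich toCop_diag.
- by rewrite /fcalc HB' toCop_sandwich toCop_diag.
Qed.

Lemma fcalc_as_poly (I : finType) (f : R -> R) (X : op I I) : herm (toCop X) ->
  exists s : seq R, forall p : {poly R}, {in s, forall x, p.[x] = f x} ->
    toCop (fcalc f X) = cpoly p (toCop X).
Proof.
move=> HX; have [U [d [HU [HXd Hf]]]] := fcalc_spec f HX.
exists [seq d i | i <- enum I] => p Hp.
rewrite Hf HXd; apply: cpoly_sandwich_diag => // i.
by apply: Hp; apply: map_f; rewrite mem_enum.
Qed.

Definition moment (I : finType) (X : cop I I) (n : nat) : CC := ctr (cpow X n.+1).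

Lemma ctr_mul_cpoly (I : finType) (p : {poly R}) (X : cop I I) :
  ctr (cmul X (cpoly p X)) = \sum_(k < size p) (p`_k)%:C%C * moment X k.
Proof.
rewrite /cpoly cmul_sumr ctr_sum; apply: eq_bigr => k _.
rewrite /moment -cpowSl /ctr mulr_sumr; apply: eq_bigr => i _.
rewrite /cmul /cscale mulr_sumr; apply: eq_bigr => j _; ring.
Qed.

Lemma tr_fcalc_moments (I J : finType) (f : R -> R) (X : op I I) (Y : op J J) :
  herm (toCop X) -> herm (toCop Y) ->
  (forall n, moment (toCop X) n = moment (toCop Y) n) ->
  tr (opmul X (fcalc f X)) = tr (opmul Y (fcalc f Y)).
Proof.
move=> HX HY HXY.
have [sX HsX] := fcalc_as_poly f HX; have [sY HsY] := fcalc_as_poly f HY.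
have [p Hp] := interpolation (sX ++ sY) f.
apply: toC_inj; rewrite !toC_tr !toCop_mul (HsX p) ?(HsY p) ?ctr_mul_cpoly.
- by apply: eq_bigr => k _; rewrite HXY.
- by move=> x xs; apply: Hp; rewrite mem_cat xs orbT.
- by move=> x xs; apply: Hp; rewrite mem_cat xs.
Qed.

Section Pinching.
Variables (N : nat) (O : finType).
Local Notation Idx := ('I_N * O)%type.

Definition pinch (Y : cop Idx Idx) : cop Idx Idx :=
  fun r r' => if r.1 == r'.1 then Y r r' else 0.
Definition blockdiag (B : cop Idx Idx) := forall r r', r.1 != r'.1 -> B r r' = 0.

Lemma toCop_Zmap (Y : op Idx Idx) : toCop (Zmap Y) = pinch (toCop Y).
Proof. by apply: copP => r r'; rewrite /toCop /Zmap /pinch; case: eqP. Qed.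

Lemma herm_pinch (Y : cop Idx Idx) : herm Y -> herm (pinch Y).
Proof.
move=> HY; apply: copP => r r'; rewrite /cadj /pinch eq_sym.
by case: eqP => _; [rewrite -{2}HY | rewrite conjC0].
Qed.

Lemma blockdiag_pinch (Y : cop Idx Idx) : blockdiag (pinch Y).
Proof. by move=> r r' /negbTE ne; rewrite /pinch ne. Qed.

Lemma blockdiag_mul (A B : cop Idx Idx) :
  blockdiag A -> blockdiag B -> blockdiag (cmul A B).
Proof.
move=> HA HB r r' ne; rewrite /cmul big1 // => s _.
case: (eqVneq r.1 s.1) => [e|n1]; last by rewrite HA ?mul0r.
by rewrite HB ?mulr0 // -e.
Qed.

Lemma blockdiag_cpoly (p : {poly R}) (A : cop Idx Idx) :
  blockdiag A -> blockdiag (cpoly p A).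
Proof.
move=> HA; have Hpow n : blockdiag (cpow A n).
  elim: n => [|n IH] /=; last exact: blockdiag_mul.
  by move=> r r' ne; rewrite /cid; case: eqP => // e; rewrite e eqxx in ne.
by move=> r r' ne; rewrite /cpoly /csum big1 // => k _; rewrite /cscale Hpow ?mulr0.
Qed.

Lemma ctr_mul_blockdiag (Y B : cop Idx Idx) :
  blockdiag B -> ctr (cmul Y B) = ctr (cmul (pinch Y) B).
Proof.
move=> HB; rewrite /ctr /cmul /pinch; apply: eq_bigr => r _; apply: eq_bigr => r' _.
by case: eqP => // /eqP ne; rewrite HB ?mulr0 // eq_sym.
Qed.

Lemma herm_Zmap (Y : op Idx Idx) : herm (toCop Y) -> herm (toCop (Zmap Y)).
Proof. by rewrite toCop_Zmap; exact: herm_pinch. Qed.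

Lemma tr_pinch (f : R -> R) (Y : op Idx Idx) : herm (toCop Y) ->
  tr (opmul Y (fcalc f (Zmap Y))) = tr (opmul (Zmap Y) (fcalc f (Zmap Y))).
Proof.
move=> HY; have [s Hs] := fcalc_as_poly f (herm_Zmap HY); have [p Hp] := interpolation s f.
apply: toC_inj; rewrite !toC_tr !toCop_mul (Hs p Hp) [toCop (Zmap Y)]toCop_Zmap.
by apply: ctr_mul_blockdiag; apply: blockdiag_cpoly; exact: blockdiag_pinch.
Qed.

End Pinching.

(* Positive semidefiniteness through the quadratic form <w, A w>, which in
   R[i] is nonnegative exactly when it is real and nonnegative. *)
Definition qform (I : finType) (A : cop I I) (w : I -> CC) : CC :=
  \sum_i \sum_j (w i)^* * (A i j * w j).

Lemma psd_qform (I : finType) (A : op I I) :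
  psd A <-> forall w, 0 <= qform (toCop A) w.
Proof.
have E v : toC (\big[Cadd/Defs.C0]_i \big[Cadd/Defs.C0]_j
    Cmul (Cconj (v i)) (Cmul (A i j) (v j))) = qform (toCop A) (fun i => toC (v i)).
  rewrite toC_big /qform; apply: eq_bigr => i _; rewrite toC_big.
  by apply: eq_bigr => j _; rewrite !toC_mul toC_conj.
split=> H w.
- have [h1 /RleP h2] := H (fun i => ofC (w i)).
  have -> : w = (fun i => toC (ofC (w i))).
    by apply: functional_extensionality => i; rewrite ofCK.
  by rewrite -E lecE /= h1 eqxx.
- by move: (H (fun i => toC (w i))); rewrite -E lecE => /andP [/eqP h1 /RleP h2].
Qed.

Lemma nonneg_parts (z : CC) : 0 <= z -> complex.Im z = 0 /\ 0 <= complex.Re z.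
Proof. by rewrite lecE => /andP [/eqP ->]. Qed.

Lemma qform_sum (I T : finType) (P : pred T) (F : T -> cop I I) w :
  qform (fun i j => \sum_(t | P t) F t i j) w = \sum_(t | P t) qform (F t) w.
Proof.
rewrite /qform.
under eq_bigr do under eq_bigr do rewrite mulr_suml mulr_sumr.
by under eq_bigr do rewrite exchange_big; rewrite exchange_big.
Qed.

Lemma qform_two (I : finType) (A : cop I I) (i j : I) (a b : CC) :
  qform A (fun k => a * (k == i)%:R + b * (k == j)%:R) =
  a^* * (a * A i i + b * A i j) + b^* * (a * A j i + b * A j j).
Proof.
have pick2 (a' b' : CC) (Y : I -> CC) :
    \sum_l (a' * (l == i)%:R + b' * (l == j)%:R) * Y l = a' * Y i + b' * Y j.
  under eq_bigr do rewrite mulrDl.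
  rewrite big_split /= (bigD1 i) //= [in X in _ + X](bigD1 j) //= !eqxx !mulr1.
  by rewrite !big1 ?addr0 // => l /negbTE ->; rewrite mulr0 mul0r.
rewrite /qform; under eq_bigr => k _.
  rewrite -mulr_sumr.
  have -> : \sum_l A k l * (a * (l == i)%:R + b * (l == j)%:R) = a * A k i + b * A k j.
    by rewrite -pick2; apply: eq_bigr => l _; rewrite mulrC.
  rewrite rmorphD !rmorphM /= !conjC_nat.
  over.
by rewrite pick2.
Qed.

Lemma psd_herm (I : finType) (A : op I I) : psd A -> herm (toCop A).
Proof.
move/psd_qform=> H; apply: copP => i j; rewrite /cadj.
have h a b := nonneg_parts (H (fun k => a * (k == j)%:R + b * (k == i)%:R)).
move: (h 1 0) (h 1 1) (h 1 'i%C) (h 0 1); rewrite !qform_two.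
move: (toCop A j j) (toCop A j i) (toCop A i j) (toCop A i i).
move=> [a1 a2] [b1 b2] [c1 c2] [d1 d2] /= e1 e2 e3 e4.
congr Complex; lra.
Qed.

Lemma psd_eigen_ge0 (I : finType) (P : op I I) (U : cop I I) (d : I -> R) :
  psd P -> unitary U -> toCop P = sandwich U (cdiag d) -> forall k, 0 <= d k.
Proof.
move/psd_qform=> HP HU HPd k; have := HP (fun i => U i k).
have -> : qform (toCop P) (fun i => U i k) = cmul (cmul (cadj U) (toCop P)) U k k.
  rewrite /qform /cmul; under [RHS]eq_bigr do rewrite mulr_suml.
  rewrite exchange_big /=; apply: eq_bigr => i _; apply: eq_bigr => j _.
  by rewrite mulrA.
rewrite HPd /sandwich -!cmulA HU cmul1c cmulA HU cmulc1 /cdiag eqxx.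
by rewrite lecR.
Qed.

Lemma msqrt_sq (I : finType) (P : op I I) : psd P ->
  cmul (cadj (toCop (msqrt P))) (toCop (msqrt P)) = toCop P.
Proof.
move=> HP; have [U [d [HU [HPd HS]]]] := fcalc_spec sqrt (psd_herm HP).
have d_ge0 := psd_eigen_ge0 HP HU HPd.
have diag_herm : herm (cdiag (fun i => sqrt (d i))).
  apply: copP => i j; rewrite /cadj /cdiag eq_sym.
  by case: eqP => [->|_]; [exact: conjc_real | exact: conjC0].
rewrite /msqrt HS cadj_sandwich diag_herm sandwich_diag_mul // HPd.
congr (sandwich U (cdiag _)); apply: functional_extensionality => i.
by apply: sqrt_sqrt; apply/RleP.
Qed.

Lemma psd_coarse (Y SB Cs HB : finType) (nB : nat) (fB : SB -> 'I_nB -> Y)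
  (PB : Y -> op HB HB) (c : Y -> Cs) b k :
  (forall y, psd (PB y)) -> psd (coarse fB PB c b k).
Proof.
move=> H; apply/psd_qform => w.
have -> : toCop (coarse fB PB c b k) =
    fun i j => \sum_(y | (y \in block fB b) && (c y == k)) toCop (PB y) i j.
  by apply: copP => i j; rewrite /toCop /coarse toC_big.
by rewrite qform_sum sumr_ge0 // => y _; apply: (proj1 (psd_qform _)).
Qed.

Lemma herm_kraus_sum (I J T : finType) (A : T -> cop I J) (X : cop J J) :
  herm X -> herm (csum (fun t => sandwich (A t) X)).
Proof.
move=> HX; rewrite /herm cadj_sum; apply: eq_csum => t.
by rewrite cadj_sandwich HX.
Qed.

Lemma csum_single (T I J : finType) (F : T -> cop I J) t :
  (forall u, u != t -> F u = @czero I J) -> csum F = F t.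
Proof.
move=> H; apply: copP => i j; rewrite /csum (bigD1 t) //= big1 ?addr0 //.
by move=> u /H ->.
Qed.

Section OrthogonalKraus.
Variables (I J T : finType) (A : T -> cop I J).
Hypothesis A_orth : forall t u, t != u -> cmul (cadj (A t)) (A u) = @czero J J.

Let gram (t : T) : cop J J := cmul (cadj (A t)) (A t).

(* Cross terms vanish in powers of the channel output. *)
Lemma cpow_kraus_sum (X : cop J J) n :
  cpow (csum (fun t => sandwich (A t) X)) n.+1 =
  csum (fun t => cmul (cmul (A t) (cmul (cpow (cmul X (gram t)) n) X)) (cadj (A t))).
Proof.
elim: n => [|n IH].
  by rewrite /= cmul1c; apply: eq_csum => t; rewrite cmul1c.
set S := csum _; rewrite -[cpow S n.+2]/(cmul (cpow S n.+1) S) IH cmul_suml.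
apply: eq_csum => t.
rewrite cmul_sumr (@csum_single _ _ _ _ t); first by rewrite /sandwich /= !cmulA.
move=> u ne; rewrite /sandwich !cmulA -(cmulA (cadj (A t)) (A u)) A_orth.
  by rewrite cmul0c !cmulc0.
by rewrite eq_sym.
Qed.

Lemma moment_kraus_sum (X : cop J J) n :
  moment (csum (fun t => sandwich (A t) X)) n = \sum_t moment (cmul X (gram t)) n.
Proof.
rewrite /moment cpow_kraus_sum ctr_sum; apply: eq_bigr => t _.
rewrite [LHS]ctrC -[cmul (cadj (A t)) (cmul (A t) _)]cmulA [LHS]ctrC /=.
by rewrite cmulA.
Qed.

End OrthogonalKraus.

Lemma sum_pair (A B : finType) (F : (A * B)%type -> CC) :
  \sum_p F p = \sum_a \sum_b F (a, b).
Proof. by rewrite pair_bigA; apply: eq_bigr => -[a b]. Qed.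

Lemma sum_pick (A : finType) (a0 : A) (F : A -> CC) :
  \sum_a (a == a0)%:R * F a = F a0.
Proof.
rewrite (bigD1 a0) //= eqxx mul1r big1 ?addr0 // => a /negbTE ->.
by rewrite mul0r.
Qed.

Lemma natr_andb (a b : bool) : ((a && b)%:R : CC) = a%:R * b%:R.
Proof. by case: a; case: b; rewrite ?mulr1 ?mulr0. Qed.

Lemma sum_pick_mid (H S W : finType) (s0 : S) (F : (H * S * W)%type -> CC) :
  \sum_x (x.1.2 == s0)%:R * F x = \sum_h \sum_w F ((h, s0), w).
Proof.
rewrite sum_pair sum_pair; apply: eq_bigr => h _ /=.
rewrite -(sum_pick s0 (fun s => \sum_w F ((h, s), w))).
by apply: eq_bigr => s _; rewrite mulr_sumr.
Qed.

(* Kraus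
   operators are indexed by the announcements t = (a,b) (and, for Z(G), by
   the key value j); their Gram operators are products of Alice's total
   effect for a and of the sum of Bob's effects for b selected by the key. *)
Section Protocol.
Variables (HA SA WA HB SB WB : finType) (N : nat) (Kp : pred (SA * SB)%type)
  (key : SA -> SB -> WB -> 'I_N)
  (QA : SA -> WA -> op HA HA) (QB : SB -> WB -> op HB HB).
Hypotheses (QA_psd : forall a w, psd (QA a w)) (QB_psd : forall b w, psd (QB b w)).
Local Notation Out := ((HA * SA * WA) * (HB * SB * WB))%type.

Definition labels (o : Out) : (SA * SB)%type := (o.1.1.2, o.2.1.2).
Definition keyOf (o : Out) : 'I_N := key o.1.1.2 o.2.1.2 o.2.2.

Definition annKraus (t : (SA * SB)%type) : cop Out (HA * HB)%type :=
  toCop (tensor (kraus QA t.1) (kraus QB t.2)).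
Definition keyMap : cop ('I_N * Out)%type Out :=
  toCop (@keyIso HA SA WA HB SB WB N Kp key).
Definition keyKraus (S : pred 'I_N) (t : (SA * SB)%type)
  : cop ('I_N * Out)%type (HA * HB)%type :=
  fun ro i => (S ro.1)%:R * cmul keyMap (annKraus t) ro i.

Definition effA (a : SA) : cop HA HA := csum (fun w => toCop (QA a w)).
Definition effB (t : (SA * SB)%type) (S : pred 'I_N) : cop HB HB :=
  csum (fun w => cscale (S (key t.1 t.2 w))%:R (toCop (QB t.2 w))).
(* the Gram operator of keyKraus S t *)
Definition gramOp (t : (SA * SB)%type) (S : pred 'I_N) : cop (HA * HB)%type (HA * HB)%type :=
  fun i i' => (Kp t)%:R * (effA t.1 i.1 i'.1 * effB t S i.2 i'.2).

Lemma annKraus_eq t o i : annKraus t o i = (labels o == t)%:R *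
  (toCop (msqrt (QA t.1 o.1.2)) o.1.1.1 i.1 * toCop (msqrt (QB t.2 o.2.2)) o.2.1.1 i.2).
Proof.
rewrite /annKraus /toCop /tensor /kraus toC_mul /labels.
case: t => a b /=; rewrite xpair_eqE.
by case: (o.1.1.2 == a); case: (o.2.1.2 == b); rewrite /= ?mul1r ?mul0r ?mulr0.
Qed.

Lemma keyKraus_eq S t ro i : keyKraus S t ro i =
  ([&& S ro.1, Kp (labels ro.2) & ro.1 == keyOf ro.2])%:R * annKraus t ro.2 i.
Proof.
rewrite /keyKraus /cmul /keyMap /toCop /keyIso.
under eq_bigr do rewrite toC_bool.
rewrite (eq_bigr (fun o => (o == ro.2)%:R *
    ((Kp (labels ro.2) && (ro.1 == keyOf ro.2))%:R * annKraus t o i))).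
  by rewrite sum_pick mulrA -natr_andb.
move=> o _; case: (eqVneq o ro.2) => [->|_]; last by rewrite /= !mul0r.
by rewrite /= mul1r.
Qed.

Lemma sum_labels t (F : Out -> CC) :
  \sum_o (labels o == t)%:R * F o =
  \sum_hA \sum_wA \sum_hB \sum_wB F (((hA, t.1), wA), ((hB, t.2), wB)).
Proof.
rewrite sum_pair.
rewrite (eq_bigr (fun oA => (oA.1.2 == t.1)%:R *
   \sum_oB (oB.1.2 == t.2)%:R * F (oA, oB))); last first.
  move=> oA _; rewrite mulr_sumr; apply: eq_bigr => oB _.
  by case: t => a b; rewrite /labels /= xpair_eqE natr_andb mulrA.
rewrite sum_pick_mid; apply: eq_bigr => hA _; apply: eq_bigr => wA _.
by rewrite sum_pick_mid.
Qed.

Lemma gram_keyKraus_out S S' t u i i' :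
  cmul (cadj (keyKraus S t)) (keyKraus S' u) i i' =
  \sum_o ([&& S (keyOf o), S' (keyOf o) & Kp (labels o)])%:R *
    ((annKraus t o i)^* * annKraus u o i').
Proof.
rewrite /cmul /cadj sum_pair exchange_big /=; apply: eq_bigr => o _.
rewrite (eq_bigr (fun r => (r == keyOf o)%:R *
   (([&& S (keyOf o), S' (keyOf o) & Kp (labels o)])%:R *
    ((annKraus t o i)^* * annKraus u o i')))); first by rewrite sum_pick.
move=> r _; rewrite !keyKraus_eq /= rmorphM rmorph_nat.
case: eqP => [->|_]; last by rewrite !andbF !mul0r.
by case: (S _); case: (S' _); case: (Kp _); rewrite /= ?mul1r ?mul0r ?mulr0.
Qed.

Lemma gram_keyKraus S S' t u :
  cmul (cadj (keyKraus S t)) (keyKraus S' u) =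
  cscale (t == u)%:R (gramOp t (predI S S')).
Proof.
apply: copP => i i'; rewrite gram_keyKraus_out /cscale /gramOp.
case: (eqVneq t u) => [<-|ne]; last first.
  rewrite mul0r big1 // => o _; rewrite !annKraus_eq.
  case: (eqVneq (labels o) t) => [e|_]; last by rewrite /= mul0r rmorph0 mul0r mulr0.
  by rewrite e (negbTE ne) /= mul0r mulr0 mulr0.
have -> : effA t.1 = csum (fun w =>
    cmul (cadj (toCop (msqrt (QA t.1 w)))) (toCop (msqrt (QA t.1 w)))).
  by apply: eq_csum => w; rewrite msqrt_sq.
have -> : effB t (predI S S') = csum (fun w => cscale (predI S S' (key t.1 t.2 w))%:R
    (cmul (cadj (toCop (msqrt (QB t.2 w)))) (toCop (msqrt (QB t.2 w))))).
  by apply: eq_csum => w; rewrite msqrt_sq.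
rewrite mul1r (eq_bigr (fun o => (labels o == t)%:R *
   (([&& S (keyOf o), S' (keyOf o) & Kp (labels o)])%:R *
   ((toCop (msqrt (QA t.1 o.1.2)) o.1.1.1 i.1 *
     toCop (msqrt (QB t.2 o.2.2)) o.2.1.1 i.2)^* *
    (toCop (msqrt (QA t.1 o.1.2)) o.1.1.1 i'.1 *
     toCop (msqrt (QB t.2 o.2.2)) o.2.1.1 i'.2))))); last first.
  move=> o _; rewrite !annKraus_eq rmorphM rmorph_nat.
  by case: (labels o == t); rewrite /= ?mul1r ?mul0r ?mulr0.
rewrite sum_labels /csum /cscale /cmul /cadj.
rewrite [X in _ * (X * _)]exchange_big /= mulr_suml mulr_sumr; apply: eq_bigr => hA _.
rewrite mulr_suml mulr_sumr; apply: eq_bigr => wA _.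
rewrite exchange_big /= mulr_sumr mulr_sumr; apply: eq_bigr => wB _.
rewrite mulr_sumr mulr_sumr mulr_sumr; apply: eq_bigr => hB _.
rewrite /keyOf /labels /= !natr_andb rmorphM.
by case: t => a b /=; ring.
Qed.

(* The key isometry already discards the rejected announcements: V Pi = V. *)
Lemma keyMap_sift :
  cmul keyMap (toCop (@siftProj HA SA WA HB SB WB Kp)) = keyMap.
Proof.
apply: copP => ro o'; rewrite /cmul /siftProj.
under eq_bigr do rewrite /toCop toC_bool natr_andb mulrCA.
rewrite (eq_bigr (fun o => (o == o')%:R * (keyMap ro o * (Kp (labels o'))%:R))).
  rewrite sum_pick /keyMap /toCop /keyIso toC_bool.
  by case: (Kp (labels o')); rewrite ?mulr1 ?mulr0 //= andbF.
by move=> o _; case: eqP => [->|]; rewrite ?mul0r.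
Qed.

Lemma Gmap_kraus (rho : op (HA * HB)%type (HA * HB)%type) :
  toCop (Gmap QA QB Kp key rho) =
  csum (fun t => sandwich (keyKraus predT t) (toCop rho)).
Proof.
rewrite /Gmap !toCop_sandwich /annMap toCop_sum.
under eq_csum do rewrite toCop_sandwich.
rewrite !sandwich_sum; apply: eq_csum => t.
rewrite !sandwichA keyMap_sift; congr (sandwich _ _).
by apply: copP => ro i; rewrite /keyKraus mul1r.
Qed.

Lemma sandwich_keyKraus S t (X : cop (HA * HB)%type (HA * HB)%type) r r' :
  sandwich (keyKraus S t) X r r' =
  (S r.1)%:R * (S r'.1)%:R * sandwich (keyKraus predT t) X r r'.
Proof.
rewrite /sandwich /cmul /cadj /keyKraus /= mulr_sumr; apply: eq_bigr => k _.
rewrite rmorphM rmorph_nat /= !rmorph1 !mul1r.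
under eq_bigr do rewrite -mulrA.
under [X in _ = _ * (X * _)]eq_bigr do rewrite mul1r.
by rewrite -mulr_sumr; ring.
Qed.

Lemma Zmap_kraus (rho : op (HA * HB)%type (HA * HB)%type) :
  toCop (Zmap (Gmap QA QB Kp key rho)) =
  csum (fun jt : ('I_N * (SA * SB))%type =>
          sandwich (keyKraus (pred1 jt.1) jt.2) (toCop rho)).
Proof.
rewrite toCop_Zmap Gmap_kraus; apply: copP => r r'.
rewrite /pinch /csum [RHS]sum_pair.
under [RHS]eq_bigr do under eq_bigr do rewrite sandwich_keyKraus /=.
under [RHS]eq_bigr do rewrite -mulr_sumr.
rewrite [RHS](eq_bigr (fun j => (j == r.1)%:R * ((r'.1 == r.1)%:R *
   \sum_t sandwich (keyKraus predT t) (toCop rho) r r'))).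
  by rewrite sum_pick eq_sym; case: (r'.1 == r.1); rewrite ?mul1r ?mul0r.
move=> j _; case: (eqVneq r.1 j) => [e|ne]; first by rewrite -?e ?eqxx ?mul1r.
by rewrite !mul0r.
Qed.

Lemma keyKraus_orth S t u : t != u ->
  cmul (cadj (keyKraus S t)) (keyKraus S u) = @czero _ _.
Proof.
by move=> ne; rewrite gram_keyKraus (negbTE ne); apply: copP => i i'; rewrite /cscale mul0r.
Qed.

Lemma keyKraus_orth_key (jt ju : ('I_N * (SA * SB))%type) : jt != ju ->
  cmul (cadj (keyKraus (pred1 jt.1) jt.2)) (keyKraus (pred1 ju.1) ju.2) = @czero _ _.
Proof.
move=> ne; rewrite gram_keyKraus; apply: copP => i i'; rewrite /cscale.
case: (eqVneq jt.2 ju.2) => [e|_]; last by rewrite mul0r.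
have ne1 : jt.1 != ju.1.
  by apply: contra ne => /eqP e1; move: e1 e; case: jt; case: ju => /= ? ? ? ? -> ->.
rewrite /gramOp /effB /csum big1 ?mulr0 // => w _; rewrite /cscale /=.
case: (eqVneq (key jt.2.1 jt.2.2 w) jt.1) => [->|]; last by rewrite mul0r.
by rewrite /= (negbTE ne1) mul0r.
Qed.

Lemma herm_Gmap (rho : op (HA * HB)%type (HA * HB)%type) :
  herm (toCop rho) -> herm (toCop (Gmap QA QB Kp key rho)).
Proof. by move=> Hr; rewrite Gmap_kraus; apply: herm_kraus_sum. Qed.

Lemma moment_Gmap (rho : op (HA * HB)%type (HA * HB)%type) n :
  moment (toCop (Gmap QA QB Kp key rho)) n =
  \sum_t moment (cmul (toCop rho) (gramOp t predT)) n.
Proof.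
rewrite Gmap_kraus moment_kraus_sum; last exact: keyKraus_orth.
apply: eq_bigr => t _; rewrite gram_keyKraus eqxx.
congr (moment (cmul _ _) _); apply: copP => i i'; rewrite /cscale mul1r.
by congr (gramOp _ _ _ _); apply: functional_extensionality => w.
Qed.

Lemma moment_ZGmap (rho : op (HA * HB)%type (HA * HB)%type) n :
  moment (toCop (Zmap (Gmap QA QB Kp key rho))) n =
  \sum_(jt : ('I_N * (SA * SB))%type)
     moment (cmul (toCop rho) (gramOp jt.2 (pred1 jt.1))) n.
Proof.
rewrite Zmap_kraus moment_kraus_sum; last exact: keyKraus_orth_key.
apply: eq_bigr => jt _; rewrite gram_keyKraus eqxx.
congr (moment (cmul _ _) _); apply: copP => i i'; rewrite /cscale mul1r.
by congr (gramOp _ _ _ _); apply: functional_extensionality => w; rewrite /= andbb.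
Qed.

End Protocol.

Lemma coarse_regroup (Y SB Cs HB : finType) (nB : nat) (fB : SB -> 'I_nB -> Y)
  (PB : Y -> op HB HB) (c : Y -> Cs) (b : SB) (u : Cs -> CC) :
  injective (fB b) ->
  csum (fun w => cscale (u (c (fB b w))) (toCop (PB (fB b w)))) =
  csum (fun k => cscale (u k) (toCop (coarse fB PB c b k))).
Proof.
move=> fB_inj; apply: copP => i i'; rewrite /csum /cscale.
transitivity (\sum_(y in block fB b) u (c y) * toCop (PB y) i i').
  by rewrite /block big_imset //= => x y _ _ /fB_inj.
rewrite (partition_big c predT) //; apply: eq_bigr => k _.
rewrite /toCop /coarse toC_big mulr_sumr.
by apply: eq_bigr => y /andP [_ /eqP ->].
Qed.

Lemma gramOp_coarse (HA SA WA HB SB Y Cs : finType) (wB N : nat)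
  (Kp : pred (SA * SB)%type) (QA : SA -> WA -> op HA HA) (PB : Y -> op HB HB)
  (fB : SB -> 'I_wB -> Y) (g : SA -> SB -> Y -> 'I_N) (c : Y -> Cs)
  (h : SA -> SB -> Cs -> 'I_N) (t : (SA * SB)%type) (S : pred 'I_N) :
  injective (fB t.2) ->
  (Kp t -> forall y, y \in block fB t.2 -> g t.1 t.2 y = h t.1 t.2 (c y)) ->
  gramOp Kp (fun a b w => g a b (fB b w)) QA (fun b w => PB (fB b w)) t S =
  gramOp Kp h QA (fun b k => coarse fB PB c b k) t S.
Proof.
move=> fB_inj Hg; apply: copP => i i'; rewrite /gramOp.
case Kt: (Kp t); last by rewrite !mul0r.
suff -> : effB (fun a b w => g a b (fB b w)) (fun b w => PB (fB b w)) t S =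
    effB h (fun b k => coarse fB PB c b k) t S by [].
rewrite /effB; transitivity (csum (fun w =>
    cscale (S (h t.1 t.2 (c (fB t.2 w))))%:R (toCop (PB (fB t.2 w))))).
  by apply: eq_csum => w; rewrite Hg // /block imset_f.
exact: (coarse_regroup PB c (fun k => (S (h t.1 t.2 k))%:R) fB_inj).
Qed.

Theorem mainTheorem3
  (HA HB : finType)                      (* orthonormal-basis index sets of H_A, H_B *)
  (X Y : finType)                        (* outcome sets of Alice's / Bob's POVMs *)
  (PA : X -> op HA HA) (PB : Y -> op HB HB)
  (SA SB : finType)                      (* announcement sets S^A, S^B *)
  (wA wB : nat)                          (* omega_A, omega_B *)
  (fA : SA -> 'I_wA -> X) (fB : SB -> 'I_wB -> Y)
  (N : nat) (Kp : pred (SA * SB)%type)   (* the kept set K *)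
  (g : SA -> SB -> Y -> 'I_N)            (* key map (relevant on K x Y) *)
  (Cs : finType) (c : Y -> Cs) (h : SA -> SB -> Cs -> 'I_N)
  (rho : op (HA * HB)%type (HA * HB)%type) :
  povm PA -> povm PB ->
  (* {X_a = f_a(Omega^A)} is a partition of X and each f_a is a bijection *)
  bijective (fun p : (SA * 'I_wA)%type => fA p.1 p.2) ->
  bijective (fun p : (SB * 'I_wB)%type => fB p.1 p.2) ->
  (forall a b, Kp (a, b) -> forall y, y \in block fB b -> g a b y = h a b (c y)) ->
  density rho ->
  let G := Gmap (fun a al => PA (fA a al)) (fun b be => PB (fB b be)) Kp
                (fun a b be => g a b (fB b be)) rho in
  let Ghat := Gmap (fun a al => PA (fA a al)) (fun b k => coarse fB PB c b k) Kp
                   h rho in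
  relent G (Zmap G) = relent Ghat (Zmap Ghat).
Proof.
move=> [PA_psd _] [PB_psd _] _ [fB_inv fBK _] Hg [rho_psd _] G Ghat.
have rho_herm := psd_herm rho_psd.
pose QA a w := PA (fA a w).
have QA_psd a w : psd (QA a w) by exact: PA_psd.
have QB_psd b w : psd (PB (fB b w)) by exact: PB_psd.
have QBhat_psd b k : psd (coarse fB PB c b k) by exact: psd_coarse.
have fB_inj b : injective (fB b).
  by move=> x y E; have := @can_inj _ _ _ _ fBK (b, x) (b, y) E => -[].
have gram_eq t S :
    gramOp Kp (fun a b w => g a b (fB b w)) QA (fun b w => PB (fB b w)) t S =
    gramOp Kp h QA (fun b k => coarse fB PB c b k) t S.
  apply: gramOp_coarse => // Kt.
  by apply: Hg; rewrite -surjective_pairing.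
have moments_G n : moment (toCop G) n = moment (toCop Ghat) n.
  rewrite (moment_Gmap _ _ QA_psd QB_psd) (moment_Gmap _ _ QA_psd QBhat_psd).
  by apply: eq_bigr => t _; rewrite gram_eq.
have moments_ZG n : moment (toCop (Zmap G)) n = moment (toCop (Zmap Ghat)) n.
  rewrite (moment_ZGmap _ _ QA_psd QB_psd) (moment_ZGmap _ _ QA_psd QBhat_psd).
  by apply: eq_bigr => jt _; rewrite gram_eq.
have G_herm : herm (toCop G) by exact: herm_Gmap rho_herm.
have Ghat_herm : herm (toCop Ghat) by exact: herm_Gmap rho_herm.
rewrite /relent /mlog2 !tr_pinch //.
rewrite (tr_fcalc_moments _ G_herm Ghat_herm moments_G).
by rewrite (tr_fcalc_moments _ (herm_Zmap G_herm) (herm_Zmap Ghat_herm) moments_ZG).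
Qed.
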